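(* Let $\mathcal U$ be a finite nonempty set, $\epsilon_1,\epsilon_2\in(0,1]$, $n_b$ a positive integer, and for each $v\in\mathcal U$ let $a_v\ge0$ be an integer, $\mu_v\in\mathbb R$ and $\sigma_v^2\ge0$. For $p\in[\max\{\epsilon_1,\epsilon_2\},1]$ define $$h_v(p)=\Big(\frac1{\epsilon_2}-\frac1p\Big)a_v^2\mu_v^2n_b+\Big(\frac1{\epsilon_1}-\frac1p\Big)a_v(\mu_v^2+\sigma_v^2)n_b^2+\Big(\frac{p}{\epsilon_1\epsilon_2}-\frac1{\epsilon_1}-\frac1{\epsilon_2}+\frac1p\Big)a_v(\mu_v^2+\sigma_v^2)n_b+\Big(\frac1p-1\Big)a_v^2\mu_v^2n_b^2,$$ $h^*(p)=\max_{v\in\mathcal U}h_v(p)$, and $h'(p)=\max\{h_{v_1}(p),h_{v_2}(p)\}$, where $v_1\in\arg\max_v a_v^2\mu_v^2$ and $v_2\in\arg\max_v a_v(\mu_v^2+\sigma_v^2)$. Then for every $p\in[\max\{\epsilon_1,\epsilon_2\},1]$, $$\frac{h^*(p)}{2}\le h'(p)\le h^*(p).$$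
   Context: Interpretation: $h_v(p)$ is the variance of the SUM join estimator when both tables use universe sampling rate $p$ and uniform sampling rates $\epsilon_1/p$, $\epsilon_2/p$, and all $n_b$ tuples of the second table $T_2$ have join value $v$; $a_v$ is the number of tuples of $T_1$ with join value $v$, and $\mu_v,\sigma_v^2$ are the mean and variance of the aggregated column over those tuples. *)

From mathcomp Require Import all_boot all_order all_algebra.
Set Implicit Arguments. Unset Strict Implicit. Unset Printing Implicit Defensive.
Import Order.TTheory GRing.Theory Num.Theory.
Local Open Scope ring_scope.

(* h_v(p): variance of the SUM join estimator for join value v. *)
Definition hv {R : realFieldType} (e1 e2 : R) (nb : nat) (a : nat) (mu s2 : R)
  (p : R) : R :=
  (e2^-1 - p^-1) * (a%:R ^+ 2 * mu ^+ 2) * nb%:R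
  + (e1^-1 - p^-1) * (a%:R * (mu ^+ 2 + s2)) * nb%:R ^+ 2
  + (p / (e1 * e2) - e1^-1 - e2^-1 + p^-1) * (a%:R * (mu ^+ 2 + s2)) * nb%:R
  + (p^-1 - 1) * (a%:R ^+ 2 * mu ^+ 2) * nb%:R ^+ 2.

(* h*(p) = max_{v in U} h_v(p); u0 is any element of the nonempty finite U
   (used only as the seed of the fold; the value does not depend on it). *)
Definition hstar {R : realFieldType} {U : finType} (u0 : U) (e1 e2 : R) (nb : nat)
  (a : U -> nat) (mu s2 : U -> R) (p : R) : R :=
  \big[Num.max/hv e1 e2 nb (a u0) (mu u0) (s2 u0) p]_(v : U)
     hv e1 e2 nb (a v) (mu v) (s2 v) p.

Definition hprime {R : realFieldType} {U : finType} (v1 v2 : U) (e1 e2 : R) (nb : nat)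
  (a : U -> nat) (mu s2 : U -> R) (p : R) : R :=
  Num.max (hv e1 e2 nb (a v1) (mu v1) (s2 v1) p) (hv e1 e2 nb (a v2) (mu v2) (s2 v2) p).

From mathcomp Require Import all_boot all_order all_algebra.
From mathcomp Require Import ring lra.
Import Order.TTheory GRing.Theory Num.Theory.
Local Open Scope ring_scope.

(* Each h_v(p) is c1 S_v + c2 Q_v, a combination of the two per-value
   statistics S_v = a_v^2 mu_v^2 and Q_v = a_v (mu_v^2 + sigma_v^2) whose
   coefficients c1, c2 do not depend on v and are nonnegative once
   max(e1, e2) <= p <= 1.  Hence h_v <= c1 S_v1 + c2 Q_v2 <= h_v1 + h_v2,
   which is at most twice h'(p). *)

Section TwoStatisticMax.
Local Set Implicit Arguments. Local Unset Strict Implicit.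

Variables (R : realFieldType) (I : finType) (S Q F : I -> R) (c1 c2 : R) (v1 v2 : I).
Hypotheses (c1_ge0 : 0 <= c1) (c2_ge0 : 0 <= c2).
Hypotheses (S_ge0 : forall v, 0 <= S v) (Q_ge0 : forall v, 0 <= Q v).
Hypotheses (S_max : forall v, S v <= S v1) (Q_max : forall v, Q v <= Q v2).
Hypothesis F_def : forall v, F v = S v * c1 + Q v * c2.

Lemma le_add_argmax v : F v <= F v1 + F v2.
Proof.
rewrite !F_def.
have := ler_wpM2r c1_ge0 (S_max v); have := ler_wpM2r c2_ge0 (Q_max v).
have := mulr_ge0 (Q_ge0 v1) c2_ge0; have := mulr_ge0 (S_ge0 v2) c1_ge0.
lra.
Qed.

Lemma bigmax_half_le_max_argmax v0 :
  \big[Num.max/F v0]_v F v / 2 <= Num.max (F v1) (F v2).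
Proof.
rewrite ler_pdivrMr // mulr_natr mulr2n.
apply: bigmax_le => [|v _]; apply: le_trans (le_add_argmax _) _;
  by apply: lerD; rewrite le_max lexx ?orbT.
Qed.

Lemma max_argmax_le_bigmax v0 :
  Num.max (F v1) (F v2) <= \big[Num.max/F v0]_v F v.
Proof. by rewrite ge_max !le_bigmax. Qed.

End TwoStatisticMax.

Section VarianceCoefficients.
Local Set Implicit Arguments. Local Unset Strict Implicit.

Variables (R : realFieldType) (e1 e2 : R) (nb : nat) (p : R).

Definition sqsum_coef : R := (e2^-1 - p^-1) * nb%:R + (p^-1 - 1) * nb%:R ^+ 2.

Definition sumsq_coef : R :=
  (e1^-1 - p^-1) * nb%:R ^+ 2 + (p - e1) * (p - e2) / (p * e1 * e2) * nb%:R.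

Lemma hvE a mu s2 : e1 != 0 -> e2 != 0 -> p != 0 ->
  hv e1 e2 nb a mu s2 p =
  a%:R ^+ 2 * mu ^+ 2 * sqsum_coef + a%:R * (mu ^+ 2 + s2) * sumsq_coef.
Proof.
move=> e1_neq0 e2_neq0 p_neq0; rewrite /hv /sqsum_coef /sumsq_coef.
by field; rewrite e1_neq0 e2_neq0 p_neq0.
Qed.

Hypotheses (e1_gt0 : 0 < e1) (e2_gt0 : 0 < e2).
Hypotheses (e1_le_p : e1 <= p) (e2_le_p : e2 <= p) (p_le1 : p <= 1).

Let p_gt0 : 0 < p. Proof. exact: lt_le_trans e2_le_p. Qed.

Let invp_le_inv e : 0 < e -> e <= p -> p^-1 <= e^-1.
Proof. by move=> e_gt0 e_le_p; rewrite lef_pV2 ?posrE. Qed.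

Lemma sqsum_coef_ge0 : 0 <= sqsum_coef.
Proof.
have invp_ge1 : 1 <= p^-1 by rewrite invf_ge1.
by rewrite /sqsum_coef addr_ge0 ?mulr_ge0 ?subr_ge0 ?invp_le_inv.
Qed.

Lemma sumsq_coef_ge0 : 0 <= sumsq_coef.
Proof.
rewrite /sumsq_coef addr_ge0 // ?mulr_ge0 ?subr_ge0 ?invp_le_inv //.
by rewrite invr_ge0 !mulr_ge0 // ltW.
Qed.

End VarianceCoefficients.

Theorem lemma7 (R : realFieldType) (U : finType) (u0 : U)
  (e1 e2 : R) (nb : nat) (a : U -> nat) (mu s2 : U -> R) (v1 v2 : U) (p : R) :
  0 < e1 -> e1 <= 1 -> 0 < e2 -> e2 <= 1 -> (0 < nb)%N ->
  (forall v, 0 <= s2 v) ->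
  (forall v, (a v)%:R ^+ 2 * mu v ^+ 2 <= (a v1)%:R ^+ 2 * mu v1 ^+ 2) ->
  (forall v, (a v)%:R * (mu v ^+ 2 + s2 v) <= (a v2)%:R * (mu v2 ^+ 2 + s2 v2)) ->
  Num.max e1 e2 <= p -> p <= 1 ->
  hstar u0 e1 e2 nb a mu s2 p / 2 <= hprime v1 v2 e1 e2 nb a mu s2 p
  /\ hprime v1 v2 e1 e2 nb a mu s2 p <= hstar u0 e1 e2 nb a mu s2 p.
Proof.
move=> e1_gt0 _ e2_gt0 _ _ s2_ge0 S_max Q_max.
rewrite ge_max => /andP[e1_le_p e2_le_p] p_le1.
have p_gt0 : 0 < p by apply: lt_le_trans e1_le_p.
have S_ge0 v : 0 <= (a v)%:R ^+ 2 * mu v ^+ 2 :> R by rewrite mulr_ge0 ?sqr_ge0.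
have Q_ge0 v : 0 <= (a v)%:R * (mu v ^+ 2 + s2 v) :> R by rewrite mulr_ge0 ?addr_ge0 ?sqr_ge0.
have F_def v := hvE nb (a v) (mu v) (s2 v)
  (lt0r_neq0 e1_gt0) (lt0r_neq0 e2_gt0) (lt0r_neq0 p_gt0).
have c1_ge0 := sqsum_coef_ge0 nb e2_gt0 e2_le_p p_le1.
have c2_ge0 := sumsq_coef_ge0 nb e1_gt0 e2_gt0 e1_le_p e2_le_p.
split.
- exact: (bigmax_half_le_max_argmax c1_ge0 c2_ge0 S_ge0 Q_ge0 S_max Q_max F_def).
- exact: (max_argmax_le_bigmax _ _ _ u0).
Qed.
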